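(* Let $A\in\mathbb{R}^{nd\times nd}$ be symmetric with $A\succ0$ and $b\in\mathbb{R}^{nd}$, and suppose $Au+b=0$ has a unique solution $u_*$. Consider the iteration $$u_{\ell+1}=u_\ell-\delta\eta\,(A u_{\ell-1}+b),\qquad \ell\ge1,$$ with $u_0=u_1=0$. Then, for $\delta\eta\in\big(0,1/(4\lambda_{\max}(A))\big)$, $u_\ell\to u_*$ as $\ell\to\infty$.
   Context: $\lambda_{\max}(A)$ denotes the largest eigenvalue of $A$. In the paper, $A=(I-\frac{\partial c}{\partial p})^\top(I-\frac{\partial c}{\partial p})$ and $Au+b=\nabla F(u)$ for the least-squares objective $F$ of the coverage control problem. *)

From HB Require Import structures.
From mathcomp Require Import all_boot all_order all_algebra.
From mathcomp Require Import all_classical all_reals all_analysis.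
Set Implicit Arguments. Unset Strict Implicit. Unset Printing Implicit Defensive.
Import Order.TTheory GRing.Theory Num.Theory.
Import numFieldNormedType.Exports.
Local Open Scope ring_scope.
Local Open Scope classical_set_scope.

Definition posdefmx (R : realType) (m : nat) (A : 'M[R]_m) : Prop :=
  forall x : 'cV[R]_m, x != 0 -> 0 < (x^T *m A *m x) 0 0.

Definition lambda_max (R : realType) (m : nat) (A : 'M[R]_m) : R :=
  sup [set a : R | eigenvalue A a].

(* The error e_l = u_l - u* obeys e_(l+1) = e_l - δη A e_(l-1) with e_0 = e_1 = -u*.
   Expanding -u* along real eigenvectors of the symmetric matrix A (obtained as real
   parts of the complex spectral decomposition), the component along an eigenvector
   of eigenvalue μ is scaled by s_l, where s_(l+2) = s_(l+1) - c s_l, s_0 = s_1 = 1 and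
   c = δημ.  Positive definiteness and δη < 1/(4 λ_max) give 0 < c < 1/4, so both
   characteristic roots (1 ± √(1 - 4c))/2 lie in (0, 1) and s_l → 0. *)

From HB Require Import structures.
From mathcomp Require Import all_boot all_order all_algebra.
From mathcomp Require Import all_classical all_reals all_analysis.
From mathcomp Require Import complex spectral polyrcf ring lra.
Set Implicit Arguments.
Unset Strict Implicit.
Unset Printing Implicit Defensive.

Import Order.TTheory GRing.Theory Num.Theory.
Import numFieldNormedType.Exports.
Local Open Scope ring_scope.
Local Open Scope classical_set_scope.

Fixpoint lag_seq (R : pzRingType) (c : R) (l : nat) : R :=
  match l with
  | (l'.+1 as l1).+1 => lag_seq c l1 - c * lag_seq c l'
  | _ => 1
  end.

Lemma lag_seqSS (R : pzRingType) (c : R) l :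
  lag_seq c l.+2 = lag_seq c l.+1 - c * lag_seq c l.
Proof. by []. Qed.

Lemma lag_seq_closed_form (R : comPzRingType) (c r1 r2 : R) :
  r1 ^+ 2 = r1 - c -> r2 ^+ 2 = r2 - c ->
  forall l, lag_seq c l * (r1 - r2) = (1 - r2) * r1 ^+ l - (1 - r1) * r2 ^+ l.
Proof.
have rootSS r k : r ^+ 2 = r - c -> r ^+ k.+2 = r ^+ k.+1 - c * r ^+ k.
  by move=> rE; rewrite -addn2 exprD rE mulrBr -exprSr [_ * c]mulrC.
move=> r1E r2E; elim/ltn_ind => -[|[|k]] IH; [by rewrite /=; ring.. |].
rewrite lag_seqSS mulrBl IH // -mulrA IH // (rootSS r1) // (rootSS r2) //.
ring.
Qed.

Lemma lag_seq_cvg0 (R : realType) (c : R) : 0 < c -> 4 * c < 1 ->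
  lag_seq c @ \oo --> 0.
Proof.
move=> c_gt0 c_lt; pose q := Num.sqrt (1 - 4 * c).
have q_gt0 : 0 < q by rewrite sqrtr_gt0; lra.
have q_lt1 : q < 1 by rewrite -sqrtr1 ltr_sqrt; lra.
have cE : c = (1 - q ^+ 2) / 4 by rewrite sqr_sqrtr; [field | lra].
clearbody q; subst c.
pose r1 := (1 + q) / 2; pose r2 := (1 - q) / 2.
have r1E : r1 ^+ 2 = r1 - (1 - q ^+ 2) / 4 by rewrite /r1; field.
have r2E : r2 ^+ 2 = r2 - (1 - q ^+ 2) / 4 by rewrite /r2; field.
have geo (r : R) : 0 < r < 1 -> (fun l => r ^+ l) @ \oo --> 0.
  by move=> r_bd; apply: cvg_expr; rewrite ger0_norm; lra.
have -> : lag_seq ((1 - q ^+ 2) / 4) =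
    fun l => ((1 - r2) * r1 ^+ l - (1 - r1) * r2 ^+ l) / q.
  apply: funext => l; rewrite -(lag_seq_closed_form r1E r2E).
  by rewrite [r1 - r2](_ : _ = q) ?mulfK ?gt_eqF // /r1 /r2; field.
have lim : (fun l => ((1 - r2) * r1 ^+ l - (1 - r1) * r2 ^+ l) / q) @ \oo -->
    ((1 - r2) * 0 - (1 - r1) * 0) / q.
  by apply: cvgMl; apply: cvgB; apply: cvgMr; apply: geo; rewrite /r1 /r2; lra.
by rewrite !mulr0 subrr mul0r in lim.
Qed.

Lemma symmetricmxP (F : fieldType) m (A : 'M[F]_m) :
  reflect (A^T = A) (A \is symmetricmx).
Proof.
rewrite qualifE expr0 scale1r; apply: (iffP eqP) => [{2}->|AT].
  by apply/matrixP => i j; rewrite !mxE.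
by apply/matrixP => i j; rewrite !mxE -[in LHS]AT mxE.
Qed.

Section RealPart.
Variable R : rcfType.
Local Notation Re := (@complex.Re R).
Local Notation toC := (real_complex R).

Lemma Re_sum (I : Type) (r : seq I) (F : I -> R[i]) :
  Re (\sum_(j <- r) F j) = \sum_(j <- r) Re (F j).
Proof. exact: (raddf_sum (Re : Rcomplex R -> R)). Qed.

Lemma Re_realM (x : R) (z : R[i]) : Re (toC x * z) = x * Re z.
Proof. by case: z => a b /=; rewrite mul0r subr0. Qed.

Lemma map_mx_Re_real m n (A : 'M[R]_(m, n)) : map_mx Re (map_mx toC A) = A.
Proof. by apply/matrixP => i j; rewrite !mxE. Qed.

Lemma map_mx_Re_sum m n (I : Type) (r : seq I) (F : I -> 'M[R[i]]_(m, n)) :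
  map_mx Re (\sum_(j <- r) F j) = \sum_(j <- r) map_mx Re (F j).
Proof.
apply/matrixP => i k; rewrite mxE !summxE Re_sum.
by apply: eq_bigr => j _; rewrite !mxE.
Qed.

Lemma map_mx_Re_eigen m (A : 'M[R]_m) (z : 'rV[R[i]]_m) (d : R) :
  z *m map_mx toC A = toC d *: z -> map_mx Re z *m A = d *: map_mx Re z.
Proof.
move=> zA; apply/rowP => k.
have := congr1 (fun y : 'rV_m => y 0 k) zA; rewrite !mxE => /(congr1 Re).
rewrite Re_sum Re_realM => <-.
by apply: eq_bigr => j _; rewrite !mxE [_ * toC _]mulrC Re_realM mulrC.
Qed.

Lemma symmetricmx_row_eigen_sum m (A : 'M[R]_m) (v : 'rV[R]_m) :
  A \is symmetricmx -> exists (mu : 'I_m -> R) (w : 'I_m -> 'rV[R]_m),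
    \sum_j w j = v /\ forall j, w j *m A = mu j *: w j.
Proof.
move=> /symmetricmxP AT; pose Ac := map_mx toC A.
have Acsym : Ac \is symmetricmx by apply/symmetricmxP; rewrite map_trmx AT.
have Acreal : Ac \is a realmx by apply/mxOverP => i j; rewrite mxE complex_real.
pose P := spectralmx Ac; pose D := spectral_diag Ac.
have AcE : Ac = invmx P *m diag_mx D *m P.
  exact/orthomx_spectralP/symmetric_normalmx.
have D_real j : toC (Re (D 0 j)) = D 0 j.
  apply: RRe_real; apply: (mxOverP (hermitian_spectral_diag_real _)).
  exact: realsym_hermsym.
have P_eigen j : row j P *m Ac = D 0 j *: row j P.
  rewrite -row_mul AcE !mulmxA mulmxV ?spectral_unit // mul1mx.
  by rewrite mul_diag_mx; apply/rowP => k; rewrite !mxE.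
exists (fun j => Re (D 0 j)).
exists (fun j => map_mx Re ((map_mx toC v *m invmx P) 0 j *: row j P)); split.
  by rewrite -map_mx_Re_sum -mulmx_sum_row mulmxKV ?spectral_unit // map_mx_Re_real.
move=> j; apply: map_mx_Re_eigen.
by rewrite D_real -scalemxAl P_eigen scalerA mulrC -scalerA.
Qed.

End RealPart.

Lemma symmetricmx_eigen_sum (R : rcfType) m (A : 'M[R]_m) (v : 'cV[R]_m) :
  A \is symmetricmx -> exists (mu : 'I_m -> R) (w : 'I_m -> 'cV[R]_m),
    \sum_j w j = v /\ forall j, A *m w j = mu j *: w j.
Proof.
move=> Asym; have /symmetricmxP AT := Asym.
have [mu [w [w_sum wA]]] := symmetricmx_row_eigen_sum v^T Asym.
exists mu, (fun j => (w j)^T); split.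
  by rewrite -(trmxK v) -w_sum linear_sum.
by move=> j; rewrite -AT -trmx_mul wA linearZ.
Qed.

Lemma symmetricmx_col_eigenvalue (F : fieldType) m (A : 'M[F]_m) (x : 'cV[F]_m) a :
  A \is symmetricmx -> x != 0 -> A *m x = a *: x -> eigenvalue A a.
Proof.
move=> /symmetricmxP AT x_neq0 Ax; apply/eigenvalueP; exists x^T.
  by rewrite -{1}AT -trmx_mul Ax linearZ.
by rewrite trmx_eq0.
Qed.

Lemma lambda_max_ge (R : realType) m (A : 'M[R]_m) a :
  eigenvalue A a -> a <= lambda_max A.
Proof.
move=> Aa; apply: sup_upper_bound => //; split; first by exists a.
have char_neq0 : char_poly A != 0 by rewrite monic_neq0 ?char_poly_monic.
exists (cauchy_bound (char_poly A)) => x; rewrite /= eigenvalue_root_char => /rootP.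
by move/(cauchy_boundP char_neq0)/ltW; apply: le_trans; rewrite ler_norm.
Qed.

Lemma posdefmx_eigen_gt0 (R : realType) m (A : 'M[R]_m) (x : 'cV[R]_m) a :
  posdefmx A -> x != 0 -> A *m x = a *: x -> 0 < a.
Proof.
move=> Apd x_neq0 Ax.
have xx_ge0 : 0 <= (x^T *m x) 0 0.
  by rewrite mxE sumr_ge0 // => i _; rewrite !mxE -expr2 sqr_ge0.
have := Apd x x_neq0; rewrite -mulmxA Ax -scalemxAr mxE.
by apply: contraTT; rewrite -!leNgt => a_le0; apply: mulr_le0_ge0.
Qed.

Section LaggedIteration.
Variables (R : comNzRingType) (m : nat) (A : 'M[R]_m) (h : R).

Lemma lagged_iteration_eigen_sum (I : finType) (mu : I -> R) (w : I -> 'cV[R]_m)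
    (e : nat -> 'cV[R]_m) :
  (forall j, A *m w j = mu j *: w j) ->
  e 0%N = \sum_j w j -> e 1%N = \sum_j w j ->
  (forall l, e l.+2 = e l.+1 - h *: (A *m e l)) ->
  forall l, e l = \sum_j lag_seq (h * mu j) l *: w j.
Proof.
move=> Aw e0 e1 eSS; elim/ltn_ind => -[|[|k]] IH.
- by rewrite e0; apply: eq_bigr => j _; rewrite scale1r.
- by rewrite e1; apply: eq_bigr => j _; rewrite scale1r.
rewrite eSS IH // IH // mulmx_sumr scaler_sumr -sumrB; apply: eq_bigr => j _.
by rewrite -scalemxAr Aw lag_seqSS scalerBl !scalerA mulrAC.
Qed.

End LaggedIteration.

Lemma lag_seq_eigen_cvg0 (R : realType) m (A : 'M[R]_m) (h mu : R) (w : 'cV[R]_m) :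
  A \is symmetricmx -> posdefmx A -> 0 < h -> h < 1 / (4 * lambda_max A) ->
  A *m w = mu *: w -> (fun l => lag_seq (h * mu) l *: w) @ \oo --> (0 : 'cV[R]_m).
Proof.
move=> Asym Apd h_gt0 h_lt Aw.
have [->|w_neq0] := eqVneq w 0.
  by under eq_fun do rewrite scaler0; exact: cvg_cst.
have mu_gt0 := posdefmx_eigen_gt0 Apd w_neq0 Aw.
have mu_le := lambda_max_ge (symmetricmx_col_eigenvalue Asym w_neq0 Aw).
have lam_gt0 : 0 < lambda_max A := lt_le_trans mu_gt0 mu_le.
move: h_lt; rewrite ltr_pdivlMr ?mulr_gt0 // => h_lt.
rewrite -(scale0r w); apply: cvgZl; apply: lag_seq_cvg0; first exact: mulr_gt0.
by apply: le_lt_trans h_lt; rewrite mulrCA ler_pM2l ?mulr_gt0 // ler_pM2l.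
Qed.

Theorem theorem4 (R : realType) (n d : nat) (A : 'M[R]_(n * d)) (b : 'cV[R]_(n * d))
  (ustar : 'cV[R]_(n * d)) (delta eta : R) (u : nat -> 'cV[R]_(n * d)) :
  A \is symmetricmx ->
  posdefmx A ->
  A *m ustar + b = 0 ->
  (forall v : 'cV[R]_(n * d), A *m v + b = 0 -> v = ustar) ->
  0 < delta * eta -> delta * eta < 1 / (4 * lambda_max A) ->
  u 0%N = 0 -> u 1%N = 0 ->
  (forall l : nat, (1 <= l)%N ->
     u l.+1 = u l - (delta * eta) *: (A *m u l.-1 + b)) ->
  u @ \oo --> ustar.
Proof.
move=> Asym Apd ustarE _ h_gt0 h_lt u0 u1 u_rec.
set h := delta * eta in h_gt0 h_lt u_rec.
have A_err v : A *m (v - ustar) = A *m v + b.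
  by rewrite mulmxBr -[A *m ustar](addrK b) ustarE sub0r opprK.
have [mu [w [w_sum Aw]]] := symmetricmx_eigen_sum (- ustar) Asym.
have err : forall l, u l - ustar = \sum_j lag_seq (h * mu j) l *: w j.
  apply: (lagged_iteration_eigen_sum Aw); rewrite ?u0 ?u1 ?sub0r //.
  by move=> k; rewrite u_rec // A_err addrAC.
have -> : u = fun l => ustar + (u l - ustar) by apply: funext => l; rewrite addrC subrK.
rewrite -[X in _ --> X]addr0; apply: cvgD; first exact: cvg_cst.
under eq_fun do rewrite err.
suff : (fun l => \sum_j lag_seq (h * mu j) l *: w j) @ \oo -->
    \sum_(j < n * d) (0 : 'cV[R]_(n * d)) by rewrite big1_eq.
apply: cvg_big => [|j _]; first exact: add_continuous.
exact: (lag_seq_eigen_cvg0 Asym Apd h_gt0 h_lt (Aw j)).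
Qed.
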